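(* Let $\mathbb{F}$ be a field of characteristic zero and $n\le m$ natural numbers. Then $W_{n,m}=\mathrm{span}_{\mathbb{F}}\{P_O: O\in\Omega_{n,m}\}$.
   Context: $\mathbb{F}\langle X\rangle$ is the free non-unitary associative algebra on $X=\{x_1,x_2,\dots\}$; $(x^n)^T$ is the smallest ideal containing $x^n$ invariant under all algebra endomorphisms; $V_m$ is the space of multilinear polynomials of degree $m$ in $x_1,\dots,x_m$; $W_{n,m}:=V_m\cap(x^n)^T$. An ordered partition of $[m]=\{1,\dots,m\}$ into $n$ parts is a set $O=\{A_1,\dots,A_n\}$ of nonempty ordered lists $A_i$ of elements of $[m]$ whose underlying sets are pairwise disjoint with union $[m]$; $\Omega_{n,m}$ is the set of these. For a list $A=[\![ab\cdots c]\!]$, $x_A:=x_ax_b\cdots x_c$, and $P_O:=\sum_{\sigma\in S_n}x_{A_{\sigma(1)}}\cdots x_{A_{\sigma(n)}}$. *)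

From HB Require Import structures.
From mathcomp Require Import all_boot all_order all_algebra all_fingroup.
From mathcomp Require Import monalg.
Set Implicit Arguments. Unset Strict Implicit. Unset Printing Implicit Defensive.
Import GRing.Theory.
Local Open Scope ring_scope.

(* The letter i : nat stands for the
   variable x_(i+1); so X = {x_1, x_2, ...} corresponds to {0, 1, 2, ...}. *)
Definition FAlg (F : fieldType) := {malg F[{fmonom nat}]}.

Definition xvar (F : fieldType) (i : nat) : FAlg F := << FMonom [:: i] >>.

(* The non-unitary free algebra F<X> is the augmentation ideal: polynomials
   with zero coefficient on the empty word. *)
Definition nonunital (F : fieldType) (f : FAlg F) : Prop :=
  f@_(FMonom [::]) = 0.

Definition is_ideal (F : fieldType) (I : FAlg F -> Prop) : Prop :=
  [/\ (forall f, I f -> nonunital f),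
      I 0,
      (forall f g, I f -> I g -> I (f + g)),
      (forall (c : F) f, I f -> I (c *: f)) &
      (forall a f, nonunital a -> I f -> I (a * f) /\ I (f * a))].

(* Algebra endomorphisms of F<X> (maps defined on the carrier FAlg F,
   only their behaviour on F<X> matters). *)
Definition is_endo (F : fieldType) (phi : FAlg F -> FAlg F) : Prop :=
  [/\ (forall f, nonunital f -> nonunital (phi f)),
      (forall f g, nonunital f -> nonunital g -> phi (f + g) = phi f + phi g),
      (forall (c : F) f, nonunital f -> phi (c *: f) = c *: phi f) &
      (forall f g, nonunital f -> nonunital g -> phi (f * g) = phi f * phi g)].

Definition is_Tideal (F : fieldType) (I : FAlg F -> Prop) : Prop :=
  is_ideal I /\ forall phi, is_endo phi -> forall f, I f -> I (phi f).

Definition in_xn_T (F : fieldType) (n : nat) (f : FAlg F) : Prop :=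
  forall I : FAlg F -> Prop, is_Tideal I -> I (xvar F 0 ^+ n) -> I f.

(* V_m: multilinear polynomials of degree m in x_1, ..., x_m, i.e. the span
   of the words x_{s(1)} ... x_{s(m)}, s a permutation. *)
Definition in_V (F : fieldType) (m : nat) (f : FAlg F) : Prop :=
  forall w : {fmonom nat}, f@_w != 0 -> perm_eq (w : seq nat) (iota 0 m).

Definition in_W (F : fieldType) (n m : nat) (f : FAlg F) : Prop :=
  in_V m f /\ in_xn_T n f.

(* An ordered partition of [m] (letters 0..m-1 standing for x_1..x_m) into
   n parts, given as an enumeration A_1, ..., A_n of its blocks: each block is
   a nonempty list, and the concatenation of the blocks is a permutation of
   [m] (i.e. blocks are duplicate-free, pairwise disjoint, cover [m]). *)
Definition ord_partition (n m : nat) (A : 'I_n -> seq nat) : Prop :=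
  (forall i, A i != [::]) /\
  perm_eq (flatten [seq A i | i <- enum 'I_n]) (iota 0 m).

Definition xlist (F : fieldType) (A : seq nat) : FAlg F :=
  \prod_(a <- A) xvar F a.

Definition P_O (F : fieldType) (n : nat) (A : 'I_n -> seq nat) : FAlg F :=
  \sum_(s : 'S_n) \prod_(i < n) xlist F (A (s i)).

Definition in_span_P (F : fieldType) (n m : nat) (f : FAlg F) : Prop :=
  exists k (c : 'I_k -> F) (O : 'I_k -> ('I_n -> seq nat)),
    (forall j, ord_partition m (O j)) /\
    f = \sum_(j < k) c j *: P_O F (O j).

From HB Require Import structures.
From mathcomp Require Import all_boot all_order all_algebra all_fingroup.
From mathcomp Require Import monalg zify.
Set Implicit Arguments. Unset Strict Implicit. Unset Printing Implicit Defensive.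
Import GRing.Theory.
Local Open Scope ring_scope.

(* Over a field of characteristic 0, a subspace containing all values of a
   polynomial in a scalar t contains each of its coefficients.  Applied to
   (g + t a)^k, the span K of the n-th powers of non-unital polynomials
   contains the derivatives sum_j g^j a g^(k-1-j) for k = n, and then also for
   k = n + 1, since g^(n+1) is 1/n times the derivative in direction g^2.
   Subtracting the two derivatives leaves a g^n and g^n a, so K is a T-ideal
   and (x^n)^T is contained in K.  Symmetrizing, n! g^n is a combination of
   the P_O of words of g, and projecting onto V_m keeps exactly those P_O
   whose blocks form an ordered partition of [m].  Conversely, (x^n)^T
   contains every g^n, and the same coefficient extraction applied to
   g + t b_k, one slot at a time, yields the full polarizations P_O. *)

Section Subspace.
Variables (F : fieldType) (V : lmodType F).

Definition subspace (P : V -> Prop) : Prop :=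
  [/\ P 0, forall u v, P u -> P v -> P (u + v) & forall (c : F) v, P v -> P (c *: v)].

Definition lin_span (S : V -> Prop) (v : V) : Prop :=
  exists2 s : seq (F * V), (forall p, p \in s -> S p.2) & v = \sum_(p <- s) p.1 *: p.2.

Variable P : V -> Prop.
Hypothesis subP : subspace P.

Lemma subspaceB u v : P u -> P v -> P (u - v).
Proof. by case: subP => _ PD PZ Pu Pv; rewrite -scaleN1r; apply/PD/PZ. Qed.

Lemma subspace_sum (I : Type) (r : seq I) (G : I -> V) :
  (forall i, P (G i)) -> P (\sum_(i <- r) G i).
Proof. by case: subP => P0 PD _ PG; elim/big_ind: _ => // i _; apply: PG. Qed.

Lemma subspaceZ_inv (c : F) v : c != 0 -> P (c *: v) -> P v.
Proof. by case: subP => _ _ PZ nz_c /(PZ c^-1); rewrite scalerA mulVf ?scale1r. Qed.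

Lemma subspaceI (Q : V -> Prop) : subspace Q -> subspace (fun v => P v /\ Q v).
Proof.
case: subP => P0 PD PZ [Q0 QD QZ].
by split=> [|u v [Pu Qu] [Pv Qv]|c v [Pv Qv]]; split; auto.
Qed.

Lemma lin_span_subspace (S : V -> Prop) : subspace (lin_span S).
Proof.
split; first by exists [::]; rewrite ?big_nil.
  move=> _ _ [s1 S1 ->] [s2 S2 ->]; exists (s1 ++ s2); rewrite ?big_cat //.
  by move=> p; rewrite mem_cat => /orP[/S1|/S2].
move=> c _ [s Ss ->]; exists [seq (c * p.1, p.2) | p <- s].
  by move=> _ /mapP[p /Ss Sp ->].
by rewrite big_map scaler_sumr; apply: eq_bigr => p _; rewrite scalerA.
Qed.

Lemma lin_span_gen (S : V -> Prop) v : S v -> lin_span S v.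
Proof.
move=> Sv; exists [:: (1, v)]; last by rewrite big_seq1 scale1r.
by move=> p; rewrite inE => /eqP ->.
Qed.

Lemma lin_span_min (S : V -> Prop) :
  (forall v, S v -> P v) -> forall v, lin_span S v -> P v.
Proof.
case: subP => P0 PD PZ SP _ [s Ss ->]; rewrite big_seq.
by elim/big_ind: _ => // p /Ss/SP; apply: PZ.
Qed.

End Subspace.

Lemma subspace_preim (F : fieldType) (U V : lmodType F) (f : {linear U -> V})
    (P : V -> Prop) : subspace P -> subspace (fun u => P (f u)).
Proof.
case=> P0 PD PZ; split=> [|u v Pu Pv|c u Pu]; rewrite ?linear0 ?linearD ?linearZ //.
- exact: PD.
- exact: PZ.
Qed.

Section CoefficientExtraction.
Variables (F : fieldType) (V : lmodType F).
Hypothesis charF : [pchar F] =i pred0.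
Variable P : V -> Prop.
Hypothesis subP : subspace P.

Lemma two_expr_neq d N : (d < N)%N -> (2 : F) ^+ d - 2 ^+ N != 0.
Proof.
move=> ltdN; rewrite -!natrX subr_eq0 eq_sym -subr_eq0 -natrB.
  by rewrite (pcharf0P F).1 // subn_eq0 leq_exp2l // -ltnNge.
by rewrite leq_exp2l // ltnW.
Qed.

(* Replacing [t] by [2 t] and subtracting [2 ^+ N] times the original
   polynomial kills the top coefficient: induction on the degree. *)
Lemma subspace_coef N (z : nat -> V) :
  (forall t : F, P (\sum_(d < N) t ^+ d *: z d)) -> forall d, (d < N)%N -> P (z d).
Proof.
have [P0 PD PZ] := subP.
elim: N z => [//|N IH] z Pz.
have Pz_lt d : (d < N)%N -> P (z d).
  move=> ltdN; pose c d : F := 2 ^+ d - 2 ^+ N.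
  apply: (subspaceZ_inv subP (two_expr_neq ltdN)).
  apply: (IH (fun d => c d *: z d)) => // t.
  have -> : \sum_(d < N) t ^+ d *: (c d *: z d) =
      \sum_(d < N.+1) (2 * t) ^+ d *: z d - 2 ^+ N *: \sum_(d < N.+1) t ^+ d *: z d.
    rewrite scaler_sumr -sumrB big_ord_recr /= exprMn scalerA -scalerBl mulrC subrr.
    rewrite scale0r addr0; apply: eq_bigr => i _.
    by rewrite !scalerA -scalerBl exprMn mulrBr mulrC [t ^+ i * _]mulrC.
  by apply: subspaceB => //; apply: PZ.
move=> d; rewrite ltnS leq_eqVlt => /orP[/eqP ->|/Pz_lt //].
have := Pz 1; rewrite big_ord_recr /= expr1n scale1r => Psum.
rewrite -[z N](addKr (\sum_(i < N) 1 ^+ i *: z i)) addrC.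
apply: subspaceB => //; apply: subspace_sum => // i.
by rewrite expr1n scale1r; apply: Pz_lt.
Qed.

End CoefficientExtraction.

Section PowerDerivative.
Variable R : pzSemiRingType.
Implicit Types g a : R.

Lemma prodr_if_eq g a k (j : 'I_k) :
  \prod_(i < k) (if i == j then a else g) = g ^+ j * a * g ^+ (k.-1 - j).
Proof.
elim: k j => [[]//|k IH] j; rewrite big_ord_recl.
case: (unliftP ord0 j) => [j' ->|->] /=.
  rewrite (eq_bigr (fun i => if i == j' then a else g)) => [|i _]; last first.
    by rewrite (inj_eq (@lift_inj _ ord0)).
  by rewrite IH /bump leq0n add1n exprS !mulrA subnS predn_sub.
by rewrite (eq_bigr (fun=> g)) ?prodr_const ?card_ord ?mul1r ?subn0.
Qed.

(* The derivative of [x |-> x ^+ k] at [g] in the direction [a]. *)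
Definition dpow k g a : R := \sum_(j < k) g ^+ j * a * g ^+ (k.-1 - j).

Lemma dpow_sqr k g : dpow k g (g * g) = g ^+ k.+1 *+ k.
Proof.
rewrite /dpow (eq_bigr (fun=> g ^+ k.+1)) ?sumr_const ?card_ord // => j _.
by rewrite -expr2 -!exprD; congr (g ^+ _); have := ltn_ord j; lia.
Qed.

Lemma dpowSl k g a : dpow k.+1 g a = a * g ^+ k + dpow k g (g * a).
Proof.
rewrite /dpow big_ord_recl /= expr0 mul1r subn0; congr (_ + _).
apply: eq_bigr => j _.
by rewrite /bump leq0n add1n exprS !mulrA -exprS -exprSr subnS predn_sub.
Qed.

Lemma dpowSr k g a : dpow k.+1 g a = dpow k g (a * g) + g ^+ k * a.
Proof.
rewrite /dpow big_ord_recr /= subnn expr0 mulr1; congr (_ + _).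
apply: eq_bigr => j _; rewrite -!mulrA -exprS.
by congr (_ * (_ * g ^+ _)); have := ltn_ord j; lia.
Qed.

End PowerDerivative.

Section SymmetrizedProduct.
Variables (R : pzSemiRingType) (n : nat).
Implicit Types b x y : 'I_n -> R.

Definition sym_prod b : R := \sum_(s : 'S_n) \prod_(i < n) b (s i).

Lemma sym_prod_perm b (t : 'S_n) : sym_prod (fun i => b (t i)) = sym_prod b.
Proof.
rewrite /sym_prod [RHS](reindex_inj (mulIg t)).
by apply: eq_bigr => s _; apply: eq_bigr => i _; rewrite permM.
Qed.

Lemma sym_prod_eq0 b j : b j = 0 -> sym_prod b = 0.
Proof.
move=> bj0; rewrite /sym_prod big1 // => s _.
case/splitPr: (mem_index_enum (s^-1 j)%g) => l1 l2.
by rewrite big_cat big_cons permKV bj0 /= mul0r mulr0.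
Qed.

Lemma sum_sym_prod_replace x y :
  \sum_(s : 'S_n) \sum_(j < n) \prod_(i < n) (if i == j then y (s i) else x (s i)) =
  \sum_(l < n) sym_prod (fun i => if i == l then y i else x i).
Proof.
rewrite /sym_prod [RHS]exchange_big /=; apply: eq_bigr => s _.
rewrite [RHS](reindex_inj (@perm_inj _ s)); apply: eq_bigr => j _.
by apply: eq_bigr => i _; rewrite (inj_eq perm_inj).
Qed.

Lemma exprn_sum_sym_prod r (u : 'I_r -> R) :
  (\sum_(i < r) u i) ^+ n *+ n`! =
  \sum_(f : {ffun 'I_n -> 'I_r}) sym_prod (fun j => u (f j)).
Proof.
have expandE : (\sum_(i < r) u i) ^+ n =
    \sum_(f : {ffun 'I_n -> 'I_r}) \prod_(j < n) u (f j).
  by rewrite -(bigA_distr_bigA (fun=> u)) prodr_const card_ord.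
rewrite -card_Sn -sumr_const /sym_prod exchange_big /=; apply: eq_bigr => s _.
pose rename (f : {ffun 'I_n -> 'I_r}) : {ffun 'I_n -> 'I_r} := [ffun j => f (s j)].
have rename_inj : injective rename.
  move=> f1 f2 /ffunP eq_f; apply/ffunP => j.
  by have := eq_f (s^-1 j)%g; rewrite !ffunE permKV.
rewrite expandE (reindex_inj rename_inj); apply: eq_bigr => f _.
by apply: eq_bigr => j _; rewrite ffunE.
Qed.

End SymmetrizedProduct.

Lemma sumr_ord_ge (V : nmodType) n k (v : V) :
  (k <= n)%N -> \sum_(l < n | (k <= l)%N) v = v *+ (n - k).
Proof.
move=> le_kn; rewrite -(big_mkord (fun l => (k <= l)%N) (fun=> v)).
rewrite (big_cat_nat (leq0n k) le_kn) /= big_nat_cond.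
rewrite big_pred0 ?add0r => [|l]; last by lia.
rewrite big_nat_cond (eq_bigl (fun i => (k <= i < n)%N && true)) -?big_nat_cond.
  exact: sumr_const_nat.
by move=> i /=; lia.
Qed.

Lemma sym_prodZ (F : fieldType) (A : algType F) n (c : 'I_n -> F) (b : 'I_n -> A) :
  sym_prod (fun i => c i *: b i) = (\prod_(i < n) c i) *: sym_prod b.
Proof.
rewrite /sym_prod scaler_sumr; apply: eq_bigr => s _.
by rewrite scaler_prod [in RHS](reindex_inj (@perm_inj _ s)).
Qed.

Lemma prod_add_scale_coef (F : fieldType) (A : algType F) N (x y : 'I_N -> A) :
  exists z : nat -> A,
  z 1%N = \sum_(j < N) \prod_(i < N) (if i == j then y i else x i) /\
  forall t : F, \prod_(i < N) (x i + t *: y i) = \sum_(d < N.+1) t ^+ d *: z d.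
Proof.
suff [z [_ z1 _ zE]] : exists z : nat -> A, [/\ z 0%N = \prod_(i < N) x i,
    z 1%N = \sum_(j < N) \prod_(i < N) (if i == j then y i else x i),
    (forall d, (N < d)%N -> z d = 0) &
    forall t : F, \prod_(i < N) (x i + t *: y i) = \sum_(d < N.+1) t ^+ d *: z d].
  by exists z.
elim: N x y => [|N IH] x y.
  exists (fun d => (d == 0%N)%:R); split=> [|||t]; rewrite ?big_ord0 //; first by case.
  by rewrite big_ord1 expr0 scale1r.
pose w i := widen_ord (leqnSn N) i.
have [z [z0 z1 zN zE]] := IH (fun i => x (w i)) (fun i => y (w i)).
exists (fun d => z d * x ord_max + (if d is d'.+1 then z d' * y ord_max else 0)).
split=> [|||t].
- by rewrite z0 addr0 big_ord_recr.
- rewrite z1 z0 big_ord_recr /= mulr_suml; congr (_ + _).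
    by apply: eq_bigr => j _; rewrite big_ord_recr /= -val_eqE /= gtn_eqF.
  rewrite big_ord_recr eqxx; congr (_ * _).
  by apply: eq_bigr => i _; rewrite -val_eqE /= ltn_eqF.
- by case=> [//|d] ltNd; rewrite !zN ?mul0r ?addr0 // ltnW.
rewrite big_ord_recr /= zE mulrDr !mulr_suml.
under [RHS]eq_bigr => d _ do rewrite scalerDr.
rewrite big_split /=; congr (_ + _).
  rewrite [in RHS]big_ord_recr /= zN // mul0r scaler0 addr0.
  by apply: eq_bigr => d _; rewrite scalerAl.
rewrite [in RHS]big_ord_recl /= scaler0 add0r.
by apply: eq_bigr => d _; rewrite -scalerAr -scalerAl scalerA -exprS /bump leq0n add1n.
Qed.

Section Polarization.
Variables (F : fieldType) (A : algType F).
Hypothesis charF : [pchar F] =i pred0.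
Variable P : A -> Prop.
Hypothesis subP : subspace P.

Lemma subspace_prod_coef1 (I : Type) (r : seq I) N (x y : I -> 'I_N -> A) :
  (forall t : F, P (\sum_(s <- r) \prod_(i < N) (x s i + t *: y s i))) ->
  P (\sum_(s <- r) \sum_(j < N) \prod_(i < N) (if i == j then y s i else x s i)).
Proof.
case: N => [|N] in x y *.
  by move=> _; rewrite big1 => [|s _]; [case: subP | rewrite big_ord0].
have [z [<- zE]] : exists z : nat -> A,
    z 1%N = \sum_(s <- r) \sum_(j < N.+1)
              \prod_(i < N.+1) (if i == j then y s i else x s i) /\
    forall t : F, \sum_(s <- r) \prod_(i < N.+1) (x s i + t *: y s i) =
                  \sum_(d < N.+2) t ^+ d *: z d.
  elim: r => [|s r [z [z1 zE]]].
    exists (fun=> 0); split=> [|t]; rewrite ?big_nil //.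
    by rewrite big1 // => d _; rewrite scaler0.
  have [u [u1 uE]] := prod_add_scale_coef (x s) (y s).
  exists (fun d => u d + z d); split=> [|t]; first by rewrite big_cons u1 z1.
  by rewrite big_cons uE zE -big_split; apply: eq_bigr => d _; rewrite scalerDr.
by move=> Pt; apply: (subspace_coef charF subP (N := N.+2)) => // t; rewrite -zE.
Qed.

Lemma subspace_dpow k g a : (forall t : F, P ((g + t *: a) ^+ k)) -> P (dpow k g a).
Proof.
move=> Pt; have := subspace_prod_coef1 (r := [:: tt])
  (x := fun _ _ => g) (y := fun _ _ => a) (N := k).
rewrite !big_seq1 /dpow; under eq_bigr do rewrite prodr_if_eq.
by apply=> t; rewrite big_seq1 prodr_const card_ord.
Qed.

End Polarization.

Section PowerSpan.
Variables (F : fieldType) (A : algType F).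
Hypothesis charF : [pchar F] =i pred0.
Variable B : A -> Prop.
Hypotheses (subB : subspace B) (mulB : forall a b, B a -> B b -> B (a * b)).
Variable n : nat.
Hypothesis n_gt0 : (0 < n)%N.

Definition pow_span : A -> Prop := lin_span (fun f => exists2 g, B g & f = g ^+ n).

Lemma pow_span_subspace : subspace pow_span.
Proof. exact: lin_span_subspace. Qed.

Lemma pow_span_pow g : B g -> pow_span (g ^+ n).
Proof. by move=> Bg; apply: lin_span_gen; exists g. Qed.

Lemma pow_span_dpow g a : B g -> B a -> pow_span (dpow n g a).
Proof.
have [_ BD BZ] := subB; move=> Bg Ba.
by apply: (subspace_dpow charF pow_span_subspace) => t; apply/pow_span_pow/BD/BZ.
Qed.

Lemma pow_span_powS g : B g -> pow_span (g ^+ n.+1).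
Proof.
move=> Bg; apply: (subspaceZ_inv pow_span_subspace (c := n%:R)).
  by rewrite (pcharf0P F).1 // -lt0n.
by rewrite scaler_nat -dpow_sqr; apply: pow_span_dpow => //; apply: mulB.
Qed.

Lemma pow_span_dpowS g a : B g -> B a -> pow_span (dpow n.+1 g a).
Proof.
have [_ BD BZ] := subB; move=> Bg Ba.
by apply: (subspace_dpow charF pow_span_subspace) => t; apply/pow_span_powS/BD/BZ.
Qed.

Lemma pow_span_mull a g : B a -> B g -> pow_span (a * g ^+ n).
Proof.
move=> Ba Bg; rewrite -[_ * _](addrK (dpow n g (g * a))) -dpowSl.
apply: (subspaceB pow_span_subspace); first exact: pow_span_dpowS.
by apply: pow_span_dpow => //; apply: mulB.
Qed.

Lemma pow_span_mulr a g : B a -> B g -> pow_span (g ^+ n * a).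
Proof.
move=> Ba Bg; rewrite -[_ * _](addKr (dpow n g (a * g))) addrC -dpowSr.
apply: (subspaceB pow_span_subspace); first exact: pow_span_dpowS.
by apply: pow_span_dpow => //; apply: mulB.
Qed.

Lemma pow_span_ideal a f : B a -> pow_span f -> pow_span (a * f) /\ pow_span (f * a).
Proof.
move=> Ba Kf; split.
  apply: (lin_span_min (subspace_preim (a \*o idfun) pow_span_subspace)) Kf.
  by move=> _ [g Bg ->]; apply: pow_span_mull.
apply: (lin_span_min (subspace_preim (a \o* idfun) pow_span_subspace)) Kf.
by move=> _ [g Bg ->]; apply: pow_span_mulr.
Qed.

Lemma pow_span_sub f : pow_span f -> B f.
Proof.
apply: lin_span_min => // _ [g Bg ->]; case: n n_gt0 => // k _.
by elim: k => [|k IH]; rewrite ?expr1 // exprS; apply: mulB.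
Qed.

End PowerSpan.

Section SymmetrizedPowers.
Variables (F : fieldType) (A : algType F).
Hypothesis charF : [pchar F] =i pred0.
Variables (B P : A -> Prop) (n : nat).
Hypotheses (subB : subspace B) (subP : subspace P).
Hypothesis P_pow : forall g, B g -> P (g ^+ n).

(* Induction on the number [k] of slots filled by the [b i]: the coefficient
   of [t] when [g + t b_k] fills the remaining slots is [n - k] times the
   symmetrized product with [k + 1] slots filled. *)
Lemma subspace_sym_prod (b : 'I_n -> A) : (forall i, B (b i)) -> P (sym_prod b).
Proof.
move: b; have [B0 BD BZ] := subB.
suff Pk k : (k <= n)%N -> forall g b, B g -> (forall i, B (b i)) ->
    P (sym_prod (fun i : 'I_n => if (i < k)%N then b i else g)).
  move=> b Bb; have := Pk n (leqnn n) 0 b B0 Bb.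
  by congr P; apply: eq_bigr => s _; apply: eq_bigr => i _; rewrite ltn_ord.
elim: k => [|k IH] le_kn g b Bg Bb.
  rewrite /sym_prod; apply: (subspace_sum subP) => s.
  rewrite (eq_bigr (fun=> g)) => [|i _] //.
  by rewrite prodr_const card_ord; apply: P_pow.
pose l0 : 'I_n := Ordinal le_kn.
pose x (i : 'I_n) : A := if (i < k)%N then b i else g.
pose y (i : 'I_n) : A := if (i < k)%N then 0 else b l0.
pose target (i : 'I_n) : A := if (i < k.+1)%N then b i else g.
have Pt t : P (\sum_(s : 'S_n) \prod_(i < n) (x (s i) + t *: y (s i))).
  have := IH (ltnW le_kn) (g + t *: b l0) b (BD _ _ Bg (BZ _ _ (Bb l0))) Bb.
  congr P; apply: eq_bigr => s _; apply: eq_bigr => i _.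
  by rewrite /x /y; case: ifP; rewrite ?scaler0 ?addr0.
have := subspace_prod_coef1 charF subP Pt; rewrite sum_sym_prod_replace.
have coef1E l : sym_prod (fun i => if i == l then y i else x i) =
    if (k <= l)%N then sym_prod target else 0.
  case: leqP => [le_kl|lt_lk]; last first.
    by apply: (sym_prod_eq0 (j := l)); rewrite eqxx /y lt_lk.
  rewrite -(sym_prod_perm target (tperm l l0)).
  apply: eq_bigr => s _; apply: eq_bigr => i _.
  rewrite /x /y /target; case: tpermP => [->|->|ne_l ne_l0].
  - by rewrite eqxx ltnNge le_kl /= ltnSn.
  - rewrite /= ltnn ltnS; case: eqP => [<-|ne_l0l]; first by rewrite leqnn.
    have ne_lk : (l : nat) != k by apply/eqP => eq_lk; apply: ne_l0l; apply: val_inj.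
    by rewrite leq_eqVlt (negbTE ne_lk) ltnNge le_kl.
  - have ne_ik : (s i : nat) != k by apply/eqP => eq_ik; apply: ne_l0; apply: val_inj.
    have -> : (s i < k.+1)%N = (s i < k)%N by rewrite ltnS leq_eqVlt (negbTE ne_ik).
    by rewrite (introF eqP ne_l).
rewrite (eq_bigr _ (fun l _ => coef1E l)) -big_mkcond sumr_ord_ge ?(ltnW le_kn) //.
rewrite -scaler_nat => /(subspaceZ_inv subP); apply.
by rewrite (pcharf0P F).1 // subn_eq0 -ltnNge.
Qed.

End SymmetrizedPowers.

Lemma malgC_central (F : fieldType) (c : F) (x : FAlg F) : c%:MP * x = x * c%:MP.
Proof.
rewrite mul_malgC malgM_def malgZ_def fgmulgU /fgscale.
by apply: eq_bigr => k _; rewrite mulrC mulm1.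
Qed.

Lemma FAlg_scalerAr (F : fieldType) (c : F) (x y : FAlg F) :
  c *: (x * y) = x * (c *: y).
Proof. by rewrite -!mul_malgC mulrA malgC_central mulrA. Qed.

(* monalg makes [{malg F[M]}] an algebra only for commutative monoids [M]. *)
HB.instance Definition _ (F : fieldType) := GRing.Lalgebra.on (FAlg F).
HB.instance Definition _ (F : fieldType) :=
  GRing.Lalgebra_isAlgebra.Build F (FAlg F) (@FAlg_scalerAr F).

Section FreeAlgebra.
Variable F : fieldType.
Implicit Types (f g a : FAlg F) (phi : FAlg F -> FAlg F).

Lemma fmonom1 : mone = FMonom [::] :> {fmonom nat}.
Proof. by apply/eqP; rewrite fmP fm1. Qed.

Lemma mcoeff1M f g :
  (f * g)@_(FMonom [::]) = f@_(FMonom [::]) * g@_(FMonom [::]).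
Proof. by rewrite -fmonom1 rmorphM. Qed.

Lemma nonunital_subspace : subspace (@nonunital F).
Proof.
rewrite /nonunital; split=> [|f g f0 g0|c f f0]; first exact: mcoeff0.
  by rewrite mcoeffD f0 g0 addr0.
by rewrite mcoeffZ f0 mulr0.
Qed.

Lemma nonunitalMl a f : nonunital a -> nonunital (a * f).
Proof. by rewrite /nonunital mcoeff1M => ->; rewrite mul0r. Qed.

Lemma nonunitalX g k : nonunital g -> nonunital (g ^+ k.+1).
Proof. by move=> nu_g; rewrite exprS; apply: nonunitalMl. Qed.

Lemma xvar_nonunital i : nonunital (xvar F i).
Proof. by rewrite /nonunital /xvar mcoeffU1. Qed.

Lemma xlistE (s : seq nat) : xlist F s = << FMonom s >>.
Proof.
elim: s => [|i s IH]; first by rewrite /xlist big_nil -fmonom1.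
rewrite /xlist big_cons -/(xlist F s) IH /xvar malgM_def fgmulUU mulr1.
by congr << _ >>; apply/eqP; rewrite fmP fmM.
Qed.

Lemma xlist_nonunital (s : seq nat) : s != [::] -> nonunital (xlist F s).
Proof.
move=> nz_s; rewrite /nonunital xlistE mcoeffU1.
by case: eqP => // -[eq_s]; rewrite eq_s in nz_s.
Qed.

Lemma is_endo0 phi : is_endo phi -> phi 0 = 0.
Proof.
case=> _ phiD _ _; have [nu0 _ _] := nonunital_subspace.
by apply: (addrI (phi 0)); rewrite -phiD ?addr0.
Qed.

Lemma is_endoX phi g k :
  is_endo phi -> nonunital g -> phi (g ^+ k.+1) = phi g ^+ k.+1.
Proof.
case=> _ _ _ phiM nu_g; elim: k => [|k IH]; first by rewrite !expr1.
by rewrite exprS phiM ?IH -?exprS //; apply: nonunitalX.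
Qed.

End FreeAlgebra.

Section Substitution.
Variables (F : fieldType) (g : FAlg F).
Hypothesis nu_g : nonunital g.

Definition subst_word (w : {fmonom nat}) : FAlg F := g ^+ size w.

Lemma subst_word_mmorphism : mmorphism subst_word.
Proof. by split=> [w1 w2|]; rewrite /subst_word ?fmM ?fm1 ?size_cat ?exprD. Qed.

HB.instance Definition _ :=
  isMultiplicative.Build {fmonom nat} (FAlg F) subst_word subst_word_mmorphism.

(* Only the image [g] of [x_1] matters; sending every variable to [g] makes
   the map on words multiplicative for free. *)
Definition subst_endo : FAlg F -> FAlg F := mmap (@malgC _ F) subst_word.

Lemma subst_endo_is_endo : is_endo subst_endo.
Proof.
split=> [f nu_f|f h _ _|c f _|f h _ _].
- rewrite /nonunital /subst_endo mmapE raddf_sum big1 // => w _ /=.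
  rewrite mcoeffCM /subst_word; case: w => -[|i s] /=; first by rewrite nu_f mul0r.
  by rewrite nonunitalX ?mulr0.
- exact: mmapD.
- by rewrite /subst_endo mmapZ mul_malgC.
- exact: (commr_mmap_is_multiplicative (fun f w _ => malgC_central f@_w _)).1.
Qed.

Lemma subst_endo_xvar i : subst_endo (xvar F i) = g.
Proof. by rewrite /subst_endo /xvar mmapU /subst_word /= expr1 rmorph1 mul1r. Qed.

End Substitution.

Section PowerTideal.
Variables (F : fieldType) (n : nat).
Hypotheses (charF : [pchar F] =i pred0) (n_gt0 : (0 < n)%N).
Local Notation K := (pow_span (@nonunital F) n).

Lemma pow_span_Tideal : is_Tideal K.
Proof.
have [nu0 nuD nuZ] := nonunital_subspace F.
have [K0 KD KZ] := pow_span_subspace (@nonunital F) n.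
have nuM (a b : FAlg F) : nonunital a -> nonunital b -> nonunital (a * b).
  by move=> nu_a _; apply: nonunitalMl.
split.
  split=> // [f|a f nu_a]; first exact: (pow_span_sub (nonunital_subspace F) nuM n_gt0).
  exact: (pow_span_ideal charF (nonunital_subspace F)).
move=> phi endo_phi f Kf; have [phi_nu phiD phiZ phiM] := endo_phi.
suff [] : nonunital f /\ K (phi f) by [].
apply: (lin_span_min (P := fun f => nonunital f /\ K (phi f)) _ _ Kf) => [|_ [g nu_g ->]].
  split=> [|u v [nu_u Ku] [nu_v Kv]|c v [nu_v Kv]].
  - by rewrite is_endo0.
  - by split; [apply: nuD | rewrite phiD //; apply: KD].
  - by split; [apply: nuZ | rewrite phiZ //; apply: KZ].
case: n n_gt0 => // k _; rewrite is_endoX //.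
by split; [apply: nonunitalX | apply/pow_span_pow/phi_nu].
Qed.

Lemma in_xn_T_pow_span (f : FAlg F) : in_xn_T n f -> K f.
Proof.
move=> Tf; apply: Tf; first exact: pow_span_Tideal.
by apply: pow_span_pow; exact: (xvar_nonunital F 0).
Qed.

Lemma in_xn_T_pow (g : FAlg F) : nonunital g -> in_xn_T n (g ^+ n).
Proof.
case: n n_gt0 => // k _ nu_g I [_ TI] Ix.
have endo_g := subst_endo_is_endo nu_g.
by have := TI _ endo_g _ Ix; rewrite is_endoX ?subst_endo_xvar //; apply: xvar_nonunital.
Qed.

End PowerTideal.

Lemma in_xn_T_subspace (F : fieldType) n : subspace (@in_xn_T F n).
Proof.
split=> [I [[_ I0 _ _ _] _] //|f g Tf Tg I TI Ix|c f Tf I TI Ix].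
  by have [[_ _ ID _ _] _] := TI; apply: ID; [apply: Tf | apply: Tg].
by have [[_ _ _ IZ _] _] := TI; apply: IZ; apply: Tf.
Qed.

Lemma P_O_in_xn_T (F : fieldType) n (O : 'I_n -> seq nat) : [pchar F] =i pred0 ->
  (0 < n)%N -> (forall i, O i != [::]) -> in_xn_T n (P_O F O).
Proof.
move=> charF n_gt0 nz_O I TI Ix; have [[_ I0 ID IZ _] _] := TI.
have subI : subspace I by split.
apply: (subspace_sym_prod charF (nonunital_subspace F) subI _
  (b := fun i => xlist F (O i))).
  by move=> g nu_g; apply: in_xn_T_pow.
by move=> i; apply: xlist_nonunital.
Qed.

Section ProjectionV.
Variables (F : fieldType) (m : nat).
Implicit Types f : FAlg F.

Definition projV f : FAlg F :=
  [malg w in msupp f => if perm_eq (w : seq nat) (iota 0 m) then f@_w else 0].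

Lemma projVE f w :
  (projV f)@_w = if perm_eq (w : seq nat) (iota 0 m) then f@_w else 0.
Proof. by rewrite mcoeffE; case: ifP => // /negbT /mcoeff_outdom ->; case: ifP. Qed.

Lemma projV_is_linear : linear projV.
Proof.
move=> c f g; apply/malgP => w.
by rewrite mcoeffD mcoeffZ !projVE mcoeffD mcoeffZ; case: ifP; rewrite ?mulr0 ?addr0.
Qed.

HB.instance Definition _ :=
  GRing.isLinear.Build F (FAlg F) (FAlg F) *:%R projV projV_is_linear.

Lemma projVZ c f : projV (c *: f) = c *: projV f.
Proof. exact: linearZ. Qed.

Lemma projV_sum (I : Type) (r : seq I) (G : I -> FAlg F) :
  projV (\sum_(i <- r) G i) = \sum_(i <- r) projV (G i).
Proof. exact: linear_sum. Qed.

Lemma projV_in_V f : in_V m (projV f).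
Proof. by move=> w; rewrite projVE; case: ifP; rewrite ?eqxx. Qed.

Lemma projV_id f : in_V m f -> projV f = f.
Proof.
move=> Vf; apply/malgP => w; rewrite projVE; case: ifP => // not_perm.
by apply/eqP; rewrite eq_sym; apply: contraFT not_perm; apply: Vf.
Qed.

Lemma projVU w :
  projV << w >> = if perm_eq (w : seq nat) (iota 0 m) then << w >> else 0.
Proof.
apply/malgP => k; rewrite projVE mcoeffU1; case: (eqVneq w k) => [<-|ne_wk].
  by case: ifP; rewrite ?mcoeff0 ?mcoeffU1 ?eqxx.
by case: ifP; case: ifP; rewrite ?mcoeff0 ?mcoeffU1 ?(negbTE ne_wk).
Qed.

End ProjectionV.

Section PartitionSpan.
Variables (F : fieldType) (n m : nat).
Hypothesis charF : [pchar F] =i pred0.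
Implicit Types (f h : FAlg F) (B : 'I_n -> seq nat).

Lemma P_OE B :
  P_O F B = \sum_(s : 'S_n) << FMonom (flatten [seq B (s i) | i <- index_enum 'I_n]) >>.
Proof. by apply: eq_bigr => s _; rewrite -xlistE /xlist big_flatten big_map. Qed.

Lemma perm_flatten_blocks B (s : 'S_n) :
  perm_eq (flatten [seq B (s i) | i <- index_enum 'I_n])
          (flatten [seq B i | i <- enum 'I_n]).
Proof.
rewrite (map_comp B s); apply/perm_flatten/perm_map/uniq_perm.
- by rewrite (map_inj_uniq (@perm_inj _ s)) index_enum_uniq.
- exact: enum_uniq.
move=> i; rewrite mem_enum; apply/mapP; exists (s^-1 i)%g; first exact: mem_index_enum.
by rewrite permKV.
Qed.

Lemma projV_P_O B : projV m (P_O F B) =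
  if perm_eq (flatten [seq B i | i <- enum 'I_n]) (iota 0 m) then P_O F B else 0.
Proof.
rewrite P_OE projV_sum; case: ifP => perm_B.
  by apply: eq_bigr => s _; rewrite projVU /= (permPl (perm_flatten_blocks B s)) perm_B.
by apply: big1 => s _; rewrite projVU /= (permPl (perm_flatten_blocks B s)) perm_B.
Qed.

Lemma P_O_in_V B : ord_partition m B -> in_V m (P_O F B).
Proof.
by case=> _ perm_B; have := @projV_in_V F m (P_O F B); rewrite projV_P_O perm_B.
Qed.

Definition is_P_O f : Prop :=
  exists2 B : 'I_n -> seq nat, ord_partition m B & f = P_O F B.

Definition partition_span : FAlg F -> Prop := lin_span is_P_O.

Lemma in_span_PE f : in_span_P n m f <-> partition_span f.
Proof.
have [_ _ SZ] := lin_span_subspace is_P_O.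
split=> [[k [c [O [part_O ->]]]]|[s gen_s ->]].
  apply: (subspace_sum (lin_span_subspace _)) => j.
  by apply/SZ/lin_span_gen; exists (O j).
have /fin_all_exists2[O part_O P_OE'] : forall j : 'I_(size s),
    exists2 B : 'I_n -> seq nat, ord_partition m B & (nth (0, 0) s j).2 = P_O F B.
  by move=> j; apply/gen_s/mem_nth.
exists (size s), (fun j => (nth (0, 0) s j).1), O; split=> //.
by rewrite (big_nth (0, 0)) big_mkord; apply: eq_bigr => j _; rewrite P_OE'.
Qed.

Lemma nonunital_decomp h : nonunital h ->
  exists r (c : 'I_r -> F) (w : 'I_r -> seq nat),
    (forall i, w i != [::]) /\ h = \sum_(i < r) c i *: xlist F (w i).
Proof.
move=> nu_h; pose ws : seq {fmonom nat} := finmap.enum_fset (msupp h).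
exists (size ws), (fun i => h@_(nth mone ws i)), (fun i => fmonom_val (nth mone ws i)).
split.
  move=> i; apply/eqP => /(congr1 (@FMonom nat)); rewrite fmK => w_empty.
  by move: (mem_nth mone (ltn_ord i)); rewrite -mcoeff_neq0 w_empty nu_h eqxx.
rewrite {1}(monalgE h) (big_nth mone) big_mkord; apply: eq_bigr => i _.
by apply/malgP => k; rewrite xlistE fmK mcoeffZ !mcoeffU mulr_natr.
Qed.

Lemma projV_pow h : nonunital h -> partition_span (projV m (h ^+ n)).
Proof.
have [S0 _ SZ] := lin_span_subspace is_P_O.
move=> /nonunital_decomp[r [c [w [nz_w ->]]]].
apply: (subspaceZ_inv (lin_span_subspace _) (c := (n`!)%:R)).
  by rewrite (pcharf0P F).1 // -lt0n fact_gt0.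
rewrite -projVZ scaler_nat exprn_sum_sym_prod projV_sum.
apply: (subspace_sum (lin_span_subspace _)) => f; rewrite sym_prodZ projVZ; apply: SZ.
rewrite -[sym_prod _]/(P_O F (fun j => w (f j))) projV_P_O; case: ifP => // perm_w.
by apply: lin_span_gen; exists (fun j => w (f j)).
Qed.

End PartitionSpan.

Lemma in_V_subspace (F : fieldType) m : subspace (@in_V F m).
Proof.
split=> [w|f g Vf Vg w|c f Vf w]; rewrite ?mcoeff0 ?eqxx ?mcoeffD ?mcoeffZ // => nz.
  by have [fw0|/Vf //] := eqVneq f@_w 0; apply: Vg; rewrite fw0 add0r in nz.
by apply: Vf; apply: contraNneq nz => ->; rewrite mulr0.
Qed.

Theorem corollary4p5 (F : fieldType) (n m : nat) :
  [pchar F]%R =i pred0 -> (0 < n)%N -> (n <= m)%N ->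
  forall f : FAlg F, in_W n m f <-> in_span_P n m f.
Proof.
move=> charF n_gt0 _ f; rewrite in_span_PE; split.
  move=> [Vf /(in_xn_T_pow_span charF n_gt0) Kf]; rewrite -(projV_id Vf).
  apply: (lin_span_min (subspace_preim (projV m) (lin_span_subspace _)) _ Kf).
  by move=> _ [g nu_g ->]; apply: projV_pow.
apply: lin_span_min => [|_ [O part_O ->]].
  exact: (subspaceI (in_V_subspace F m) (in_xn_T_subspace F n)).
split; first exact: P_O_in_V.
by apply: P_O_in_xn_T => //; case: part_O.
Qed.
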